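(* There exists a family of MDPs $(\mathcal{M}_n)_{n\ge1}$ such that for each $n$ there are a trace $\tau$ and a state-risk function $r$ of $\mathcal{M}_n$ such that, with $B:=V(\mathsf{est}_{\mathsf{MDP}}(\tau))$, we have $|B|=2^n$, and for every $\mathsf{bel}\in B$ there exists $\tau'\in\mathsf{Z}^+$ with $R_r(\tau\cdot\tau')>\sup_{\mathsf{bel}''\in B'}\sum_{s}\mathsf{bel}''(s)\cdot r(s)$, where $B'=\mathsf{est}^{\mathsf{up}}(B\setminus\{\mathsf{bel}\},\tau')$.
   Context: An MDP is a tuple $\langle S,\iota,\mathsf{Act},P,\mathsf{Z},\mathsf{obs}\rangle$: finite state set $S$, initial distribution $\iota\in\mathsf{Distr}(S)$, finite action set $\mathsf{Act}$, partial transition function $P\colon S\times\mathsf{Act}\rightharpoonup\mathsf{Distr}(S)$ (write $P(s,\alpha,s')=P(s,\alpha)(s')$), finite observation set $\mathsf{Z}$, observation function $\mathsf{obs}\colon S\to\mathsf{Distr}(\mathsf{Z})$; $\mathsf{AvAct}(s)=\{\alpha\mid P(s,\alpha)\text{ defined}\}\neq\emptyset$. A finite path is $\pi=s_0a_0\dots a_{n-1}s_n$ with $\iota(s_0)>0$, $P(s_i,a_i)(s_{i+1})>0$; $\mathrm{last}(\pi)=s_n$. A scheduler $\sigma$ maps each finite path $\pi$ to a distribution on $\mathsf{AvAct}(\mathrm{last}(\pi))$; $\Sigma$ is the set of schedulers; $\Pr^\sigma(\pi)=\iota(s_0)\prod_{i<n}\sigma(s_0a_0\dots s_i)(a_i)P(s_i,a_i)(s_{i+1})$.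 For a trace $\tau=z_0\dots z_n$ and path $\pi=s_0\dots s_m$, $\Pr(\tau\mid\pi)=\prod_{i=0}^n\mathsf{obs}(s_i)(z_i)$ if $m=n$, else $0$; $\mathrm{Paths}(\tau)$ are the paths with as many states as $\tau$ has observations; $\Pr^\sigma(\tau)=\sum_\pi\Pr^\sigma(\pi)\Pr(\tau\mid\pi)$; $\Pr^\sigma(\pi\mid\tau)=\Pr(\tau\mid\pi)\Pr^\sigma(\pi)/\Pr^\sigma(\tau)$ ($0/0=0$). For $r\colon S\to\mathbb{R}_{\ge0}$, $R_r(\tau)=\sup_{\sigma\in\Sigma}\sum_{\pi\in\mathrm{Paths}(\tau)}\Pr^\sigma(\pi\mid\tau)r(\mathrm{last}(\pi))$. Beliefs: $\mathsf{Bel}=\mathsf{Distr}(S)\cup\{\mathbf{0}\}$ in $\mathbb{R}^S$. For $\mathsf{bel}\in\mathsf{Bel}$, $z\in\mathsf{Z}$: $\mathsf{bel}'\in\mathsf{est}^{\mathsf{up}}(\mathsf{bel},z)$ iff there is $\varsigma\colon S\to\mathsf{Distr}(\mathsf{Act})$ with $\varsigma(s)$ supported in $\mathsf{AvAct}(s)$ and $\mathsf{bel}'(s')=\dfrac{\sum_s\mathsf{bel}(s)\sum_\alpha\varsigma(s)(\alpha)P(s,\alpha,s')\mathsf{obs}(s')(z)}{\sum_s\mathsf{bel}(s)\sum_\alpha\varsigma(s)(\alpha)\sum_{\hat s}P(s,\alpha,\hat s)\mathsf{obs}(\hat s)(z)}$ ($0/0=0$); for sets, $\mathsf{est}^{\mathsf{up}}(B,z)=\bigcup_{\mathsf{bel}\in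 B}\mathsf{est}^{\mathsf{up}}(\mathsf{bel},z)$, and for traces $\mathsf{est}^{\mathsf{up}}(B,z\cdot\tau'')=\mathsf{est}^{\mathsf{up}}(\mathsf{est}^{\mathsf{up}}(B,z),\tau'')$. $\mathsf{est}_{\mathsf{MDP}}(z)=\{b_z\}$ with $b_z(s)=\iota(s)\mathsf{obs}(s)(z)/\sum_{\hat s}\iota(\hat s)\mathsf{obs}(\hat s)(z)$ (or $\mathbf{0}$ if the denominator is $0$), $\mathsf{est}_{\mathsf{MDP}}(\tau\cdot z)=\mathsf{est}^{\mathsf{up}}(\mathsf{est}_{\mathsf{MDP}}(\tau),z)$. $V(B)$ is the set of elements of $B$ that are not convex combinations of other elements of $B$. *)

From HB Require Import structures.
From mathcomp Require Import all_boot all_order all_algebra.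
From mathcomp Require Import boolp classical_sets cardinality reals.
Set Implicit Arguments. Unset Strict Implicit. Unset Printing Implicit Defensive.
Import Order.TTheory GRing.Theory Num.Theory.
Local Open Scope ring_scope.
Local Open Scope classical_set_scope.

Section MDPDefs.
Variable R : realType.

Definition is_distr (T : finType) (f : T -> R) : Prop :=
  (forall x, 0 <= f x) /\ \sum_(x : T) f x = 1.

(* An MDP <S, iota, Act, P, Z, obs> over finite types S, Act, Z.
   The partial transition function is P : S -> Act -> option (S -> R). *)
Record mdp (S Act Z : finType) := MDP {
  iota : S -> R;
  trans : S -> Act -> option (S -> R);
  obs : S -> Z -> R;
  iota_distr : is_distr iota;
  trans_distr : forall s a d, trans s a = Some d -> is_distr d;
  obs_distr : forall s, is_distr (obs s);
  avact_nonempty : forall s, exists a, trans s a <> None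
}.

Record MDPpack := Pack {
  pS : finType; pAct : finType; pZ : finType;
  pM : mdp pS pAct pZ
}.

Context {S Act Z : finType} (M : mdp S Act Z).

Definition avail (s : S) (a : Act) : Prop := trans M s a <> None.

(* P(s, a, s'), where defined (0 otherwise; only used where defined) *)
Definition Pt (s : S) (a : Act) (s' : S) : R :=
  if trans M s a is Some d then d s' else 0.

(* A finite path s0 a0 s1 ... a_{n-1} s_n is encoded as (s0, [(a0,s1);...;(a_{n-1},s_n)]) *)
Definition plast (s0 : S) (steps : seq (Act * S)) : S := last s0 (map snd steps).

Fixpoint valid_steps (cur : S) (steps : seq (Act * S)) : Prop :=
  match steps with
  | [::] => True
  | (a, s') :: rest => avail cur a /\ 0 < Pt cur a s' /\ valid_steps s' rest
  end.

Definition is_path (s0 : S) (steps : seq (Act * S)) : Prop :=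
  0 < iota M s0 /\ valid_steps s0 steps.

Definition scheduler := S -> seq (Act * S) -> Act -> R.

Definition is_scheduler (sigma : scheduler) : Prop :=
  forall s0 steps, is_path s0 steps ->
    is_distr (sigma s0 steps) /\
    (forall a, 0 < sigma s0 steps a -> avail (plast s0 steps) a).

Fixpoint pr_aux (sigma : scheduler) (s0 : S) (pre : seq (Act * S)) (cur : S)
    (rest : seq (Act * S)) : R :=
  match rest with
  | [::] => 1
  | (a, s') :: rest' =>
      sigma s0 pre a * Pt cur a s' * pr_aux sigma s0 (rcons pre (a, s')) s' rest'
  end.

Definition pr_path (sigma : scheduler) (s0 : S) (steps : seq (Act * S)) : R :=
  iota M s0 * pr_aux sigma s0 [::] s0 steps.

Definition pr_trace_given_path (tau : seq Z) (s0 : S) (steps : seq (Act * S)) : R :=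
  match tau with
  | [::] => 0
  | z0 :: _ =>
      if size tau == (size steps).+1 then
        \prod_(i < size tau) obs M (nth s0 (s0 :: map snd steps) i) (nth z0 tau i)
      else 0
  end.

(* Paths(tau): the (finitely many) paths with as many states as tau has
   observations, encoded as (s0, steps) with steps of length |tau|-1 *)
Definition pathsT (tau : seq Z) := (S * ((size tau).-1).-tuple (Act * S))%type.

Definition pr_trace (sigma : scheduler) (tau : seq Z) : R :=
  \sum_(p : pathsT tau | `[< is_path p.1 p.2 >])
     pr_path sigma p.1 p.2 * pr_trace_given_path tau p.1 p.2.

(* Pr^sigma(pi | tau), with 0/0 = 0 (MathComp: x / 0 = 0) *)
Definition pr_path_given_trace (sigma : scheduler) (tau : seq Z)
    (s0 : S) (steps : seq (Act * S)) : R :=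
  pr_trace_given_path tau s0 steps * pr_path sigma s0 steps / pr_trace sigma tau.

Definition Rr (r : S -> R) (tau : seq Z) : R :=
  sup [set x | exists sigma, is_scheduler sigma /\
        x = \sum_(p : pathsT tau | `[< is_path p.1 p.2 >])
              pr_path_given_trace sigma tau p.1 p.2 * r (plast p.1 p.2)].

Definition belief := S -> R.
Definition is_belief (b : belief) : Prop := is_distr b \/ b = (fun _ => 0).

Definition est_up1 (bel : belief) (z : Z) : set belief :=
  [set bel' | exists vs : S -> Act -> R,
     (forall s, is_distr (vs s) /\ (forall a, 0 < vs s a -> avail s a)) /\
     forall s',
       bel' s' =
         (\sum_(s : S) bel s * \sum_(a : Act) vs s a * Pt s a s' * obs M s' z) /
         (\sum_(s : S) bel s * \sum_(a : Act) vs s a *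
              \sum_(sh : S) Pt s a sh * obs M sh z)].

Definition est_up_set (B : set belief) (z : Z) : set belief :=
  \bigcup_(b in B) est_up1 b z.

Definition est_up (B : set belief) (tau : seq Z) : set belief :=
  foldl est_up_set B tau.

Definition b_init (z : Z) : belief :=
  fun s => iota M s * obs M s z / \sum_(sh : S) iota M sh * obs M sh z.

Definition est_MDP (tau : seq Z) : set belief :=
  match tau with
  | [::] => set0 (* traces are non-empty; unused *)
  | z :: tau' => est_up [set b_init z] tau'
  end.

End MDPDefs.

Definition convex_comb (R : realType) (S : finType) (b : S -> R) (C : set (S -> R)) : Prop :=
  exists (k : nat) (f : 'I_k -> S -> R) (w : 'I_k -> R),
    (forall i, C (f i)) /\ (forall i, 0 <= w i) /\ \sum_(i < k) w i = 1 /\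
    forall s, b s = \sum_(i < k) w i * f i s.

Definition Vext (R : realType) (S : finType) (B : set (S -> R)) : set (S -> R) :=
  [set b | B b /\ ~ convex_comb b (B `\ b)].

(* In M_n the initial state None moves, under action a, to the absorbing
   state Some a; an absorbing state Some j emits None or Some j with
   probability 1/2 each, while None always emits None.  After observing
   [None; None] the scheduler's randomised choice of action can produce every
   distribution over the 2^n absorbing states, so the belief set is the whole
   simplex and its vertices are the 2^n point masses.  Once the point mass at
   Some j is discarded, the observation Some j is impossible from every
   remaining vertex, so they all update to the zero belief (expected risk 0
   for r = 1), whereas the scheduler that always picks j explains the trace
   [None; None; Some j] with positive probability, giving risk 1. *)

From HB Require Import structures.
From mathcomp Require Import all_boot all_order all_algebra.
From mathcomp Require Import boolp classical_sets cardinality reals.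
From mathcomp Require Import ring lra.
Set Implicit Arguments. Unset Strict Implicit. Unset Printing Implicit Defensive.
Import Order.TTheory GRing.Theory Num.Theory.
Local Open Scope ring_scope.
Local Open Scope classical_set_scope.

Lemma sum_option (R : realType) (T : finType) (F : option T -> R) :
  \sum_(x : option T) F x = F None + \sum_(t : T) F (Some t).
Proof.
rewrite (bigD1 None) //=; congr (_ + _).
rewrite (reindex_omap Some idfun) => [|[t|] //].
by apply: eq_bigl => t; rewrite /= eqxx.
Qed.

Section Distributions.
Context {R : realType} {T : finType}.
Implicit Types (b : T -> R) (t : T).

Definition delta_belief t : T -> R := fun x => (x == t)%:R.

Lemma delta_belief_id t : delta_belief t t = 1.
Proof. by rewrite /delta_belief eqxx. Qed.

Lemma sum_delta_mull t (F : T -> R) : \sum_x delta_belief t x * F x = F t.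
Proof.
rewrite (bigD1 t) //= /delta_belief eqxx mul1r big1 ?addr0 // => x /negbTE ->.
by rewrite mul0r.
Qed.

Lemma is_distr_delta t : is_distr (delta_belief t).
Proof.
split=> [x|]; first exact: ler0n.
by rewrite -[RHS](sum_delta_mull t (fun=> 1)); apply: eq_bigr => x _; rewrite mulr1.
Qed.

Lemma delta_belief_inj : injective delta_belief.
Proof.
move=> t1 t2 /(congr1 (fun b => b t1)); rewrite /delta_belief eqxx.
by case: eqP => // _ /eqP; rewrite oner_eq0.
Qed.

Lemma sum_eq1_neq0 (I : finType) (F : I -> R) : \sum_i F i = 1 -> exists i, F i != 0.
Proof.
move=> F_sum; apply: contrapT => F0; move: F_sum; rewrite big1 => [/eqP|i _].
  by rewrite eq_sym oner_eq0.
by apply/eqP; apply: contra_notT F0 => Fi; exists i.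
Qed.

Lemma distr_le1 b t : is_distr b -> b t <= 1.
Proof.
case=> b_ge0 <-; rewrite (bigD1 t) //= lerDl.
by apply: sumr_ge0 => x _; exact: b_ge0.
Qed.

Lemma distr_eq_delta b t : is_distr b -> b t = 1 -> b = delta_belief t.
Proof.
case=> b_ge0 b_sum bt1.
have rest0 : \sum_(x | x != t) b x = 0.
  by move: b_sum; rewrite (bigD1 t) //= bt1; lra.
have b0 := psumr_eq0P (fun x _ => b_ge0 x) rest0.
apply: funext => x; rewrite /delta_belief.
by have [->|/b0 ->] := eqVneq x t.
Qed.

Lemma convex_comb2 b (C : set (T -> R)) (w : R) b1 b2 :
  0 <= w <= 1 -> C b1 -> C b2 -> (forall x, b x = w * b1 x + (1 - w) * b2 x) ->
  convex_comb b C.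
Proof.
move=> /andP[w_ge0 w_le1] Cb1 Cb2 bE.
exists 2%N, (fun i : 'I_2 => if i == ord0 then b1 else b2).
exists (fun i : 'I_2 => if i == ord0 then w else 1 - w).
split; first by move=> i; case: ifP.
split; first by move=> i; case: ifP => _ //; rewrite subr_ge0.
by split=> [|x]; rewrite !big_ord_recl big_ord0 /= ?addr0 ?bE; lra.
Qed.

(* Some f i with w i > 0 must put mass 1 on t, hence be delta_belief t itself. *)
Lemma delta_Vext (B : set (T -> R)) t :
  (forall b, B b -> is_distr b) -> B (delta_belief t) -> Vext B (delta_belief t).
Proof.
move=> B_distr Bt; split=> // -[k [f [w [Cf [w_ge0 [w_sum bE]]]]]].
have ft_le1 i : f i t <= 1 by apply: distr_le1; apply: B_distr; case: (Cf i).
have terms_ge0 i : 0 <= w i * (1 - f i t) by rewrite mulr_ge0 // subr_ge0.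
have terms_sum0 : \sum_(i < k) w i * (1 - f i t) = 0.
  under eq_bigr do rewrite mulrBr mulr1.
  by rewrite sumrB w_sum -bE delta_belief_id subrr.
have terms0 := psumr_eq0P (fun i _ => terms_ge0 i) terms_sum0.
have [i wi0] := sum_eq1_neq0 w_sum.
have /eqP := terms0 i erefl; rewrite mulf_eq0 (negbTE wi0) subr_eq0 => /eqP fit.
case: (Cf i) => /B_distr fi_distr; apply.
exact: distr_eq_delta.
Qed.

Definition distr_on (A : set T) : set (T -> R) :=
  [set b | is_distr b /\ forall t, ~ A t -> b t = 0].

Lemma distr_on_delta (A : set T) t : A t -> distr_on A (delta_belief t).
Proof.
split=> [|x Ax]; first exact: is_distr_delta.
by rewrite /delta_belief; case: eqP => // xt; rewrite xt in Ax.
Qed.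

Definition cond_compl b t : T -> R :=
  fun x => (b x - b t * delta_belief t x) / (1 - b t).

Lemma cond_compl_id b t : cond_compl b t t = 0.
Proof. by rewrite /cond_compl delta_belief_id mulr1 subrr mul0r. Qed.

Lemma cond_complE b t x : b t != 1 ->
  b x = b t * delta_belief t x + (1 - b t) * cond_compl b t x.
Proof.
move=> bt1; rewrite /cond_compl mulrCA divff ?mulr1; first ring.
by rewrite subr_eq0 eq_sym.
Qed.

Lemma distr_on_cond_compl (A : set T) b t :
  distr_on A b -> b t < 1 -> distr_on A (cond_compl b t).
Proof.
move=> [[b_ge0 b_sum] bA] bt_lt1; split; first split.
- move=> x; have [->|xt] := eqVneq x t; first by rewrite cond_compl_id.
  rewrite /cond_compl /delta_belief (negbTE xt) mulr0 subr0 divr_ge0 //; lra.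
- rewrite /cond_compl -big_distrl /= sumrB -big_distrr /=.
  by rewrite (is_distr_delta t).2 mulr1 b_sum divff //; apply/eqP; lra.
- move=> x Ax; have [xt|xt] := eqVneq x t; first by rewrite xt cond_compl_id.
  by rewrite /cond_compl /delta_belief (negbTE xt) mulr0 subr0 bA // mul0r.
Qed.

(* A b that is no point mass has some 0 < b t < 1, and then mixes
   delta_belief t with cond_compl b t, both differing from b at t. *)
Lemma Vext_distr_on (A : set T) :
  Vext (distr_on A) = [set delta_belief t | t in A].
Proof.
apply/seteqP; split=> [b [[b_distr bA] b_ext]|_ [t At <-]]; last first.
  by apply: delta_Vext => [b []//|]; exact: distr_on_delta.
apply: contrapT => b_nondelta; apply: b_ext.
have [t bt0] := sum_eq1_neq0 b_distr.2.
have At : A t by apply: contrapT => /bA /eqP; rewrite (negbTE bt0).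
have bt_gt0 : 0 < b t by rewrite lt0r bt0 b_distr.1.
have bt_lt1 : b t < 1.
  rewrite lt_neqAle distr_le1 // andbT; apply/eqP => bt1.
  by apply: b_nondelta; exists t => //; rewrite (distr_eq_delta b_distr bt1).
apply: (convex_comb2 (w := b t) (b1 := delta_belief t) (b2 := cond_compl b t)).
- by rewrite !ltW.
- split; first exact: distr_on_delta.
  by move=> /(congr1 (fun f => f t)) /=; rewrite delta_belief_id; lra.
- split; first exact: distr_on_cond_compl.
  by move=> /(congr1 (fun f => f t)) /=; rewrite cond_compl_id; lra.
- by move=> x; apply: cond_complE; rewrite lt_eqF.
Qed.

End Distributions.

Section TraceProbability.
Variables (R : realType) (S Act Z : finType) (M : mdp R S Act Z).
Variable sigma : @scheduler R S Act.
Hypothesis sigma_ge0 : forall s0 pre a, 0 <= sigma s0 pre a.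

Lemma Pt_ge0 s a s' : 0 <= Pt M s a s'.
Proof.
rewrite /Pt; case E: (trans M s a) => [d|] //.
by case: (trans_distr E) => + _; apply.
Qed.

Lemma pr_aux_ge0 s0 rest pre cur : 0 <= pr_aux M sigma s0 pre cur rest.
Proof.
elim: rest pre cur => [|[a s'] rest IH] pre cur /=; first exact: ler01.
by rewrite !mulr_ge0 // Pt_ge0.
Qed.

Lemma pr_path_ge0 s0 steps : 0 <= pr_path M sigma s0 steps.
Proof. by rewrite mulr_ge0 ?pr_aux_ge0 //; case: (iota_distr M) => + _; apply. Qed.

Lemma pr_trace_given_path_ge0 tau s0 steps :
  0 <= pr_trace_given_path M tau s0 steps.
Proof.
rewrite /pr_trace_given_path; case: tau => [|z0 t] //; case: ifP => // _.
by apply: prodr_ge0 => i _; case: (obs_distr M (nth s0 (s0 :: map snd steps) i)) => + _; apply.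
Qed.

Lemma pr_trace_ge_path tau (p : @pathsT S Act Z tau) : is_path M p.1 p.2 ->
  pr_path M sigma p.1 p.2 * pr_trace_given_path M tau p.1 p.2 <= pr_trace M sigma tau.
Proof.
move=> p_path; rewrite /pr_trace (bigD1 p) ?asboolT //= lerDl.
by apply: sumr_ge0 => q _; rewrite mulr_ge0 ?pr_path_ge0 ?pr_trace_given_path_ge0.
Qed.

End TraceProbability.

Lemma Rr_const1_ge1 (R : realType) (S Act Z : finType) (M : mdp R S Act Z)
    (sigma : @scheduler R S Act) tau :
  is_scheduler M sigma -> 0 < pr_trace M sigma tau -> 1 <= Rr M (fun=> 1) tau.
Proof.
have totalE sg : \sum_(p : @pathsT S Act Z tau | `[< is_path M p.1 p.2 >])
    pr_path_given_trace M sg tau p.1 p.2 * 1 = pr_trace M sg tau / pr_trace M sg tau.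
  rewrite /pr_trace big_distrl /=; apply: eq_bigr => p _.
  by rewrite /pr_path_given_trace mulr1 (mulrC (pr_trace_given_path _ _ _ _)).
move=> sigma_sched tau_gt0; apply: sup_upper_bound; last first.
  by exists sigma; rewrite totalE divff ?gt_eqF.
split; first by exists 1, sigma; rewrite totalE divff ?gt_eqF.
exists 1 => _ [sg [_ ->]]; rewrite totalE.
by have [->|/divff ->] := eqVneq (pr_trace M sg tau) 0; rewrite ?mul0r ?ler01.
Qed.

Lemma sup_le0 (R : realType) (E : set R) : (forall x, E x -> x <= 0) -> sup E <= 0.
Proof.
move=> E_le0; have [->|E_neq0] := eqVneq E set0; first by rewrite sup0.
by apply: ge_sup; [exact/set0P | exact: E_le0].
Qed.

Section ChoiceMDP.
Variables (R : realType) (N : nat).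
Hypothesis N_gt0 : (0 < N)%N.

Local Notation state := (option 'I_N).
Local Notation delta := (@delta_belief R state).

Definition commit (s : state) (a : 'I_N) : state :=
  Some (if s is Some j then j else a).

Definition choice_obs (s : state) : state -> R :=
  if s is Some j then fun z => (delta None z + delta (Some j) z) / 2
  else delta None.

Lemma choice_trans_distr s a d :
  Some (delta (commit s a)) = Some d -> is_distr d.
Proof. by case=> <-; exact: is_distr_delta. Qed.

Lemma choice_obs_distr s : is_distr (choice_obs s).
Proof.
case: s => [j|]; last exact: is_distr_delta.
split=> [z|]; first by rewrite divr_ge0 ?addr_ge0 ?ler0n.
rewrite -big_distrl big_split /= !(is_distr_delta _).2.
by apply: divff; apply/eqP; lra.
Qed.

Lemma choice_avact (s : state) : exists a, Some (delta (commit s a)) <> None.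
Proof. by exists (Ordinal N_gt0). Qed.

Definition choice_mdp : mdp R state 'I_N state :=
  MDP (is_distr_delta None) choice_trans_distr choice_obs_distr choice_avact.

Lemma Pt_choice s a : Pt choice_mdp s a = delta (commit s a).
Proof. by []. Qed.

Lemma choice_obs_None j : choice_obs (Some j) None = 2^-1.
Proof. by rewrite /= /delta_belief /= addr0 mul1r. Qed.

Lemma b_init_None : b_init choice_mdp None = delta None.
Proof.
apply: funext => s; rewrite /b_init /= sum_delta_mull /= delta_belief_id divr1.
by case: s => [j|]; rewrite /delta_belief /= ?mul0r ?mul1r.
Qed.

Lemma update_init_None (vs : state -> 'I_N -> R) s' :
  \sum_a vs None a = 1 ->
  (\sum_s delta None s * \sum_a vs s a * Pt choice_mdp s a s' * obs choice_mdp s' None) /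
  (\sum_s delta None s * \sum_a vs s a * \sum_sh Pt choice_mdp s a sh * obs choice_mdp sh None)
  = if s' is Some j then vs None j else 0.
Proof.
move=> vs_sum; rewrite /= !sum_delta_mull.
under [X in _ / X]eq_bigr do rewrite Pt_choice sum_delta_mull choice_obs_None.
rewrite -[X in _ / X]big_distrl /= vs_sum mul1r.
case: s' => [j|]; last first.
  by rewrite big1 ?mul0r // => a _; rewrite Pt_choice /delta_belief mulr0 mul0r.
rewrite choice_obs_None -big_distrl /= mulfK; last by apply/eqP; lra.
under eq_bigr do rewrite mulrC Pt_choice /delta_belief /= (inj_eq Some_inj) eq_sym.
exact: sum_delta_mull.
Qed.

Lemma est_MDP_choice : est_MDP choice_mdp [:: None; None] = distr_on (range Some).
Proof.
rewrite /est_MDP /est_up /= /est_up_set b_init_None bigcup_set1.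
apply/seteqP; split=> [b [vs [vs_ok bE]]|b [b_distr b0]].
  have vs_sum := (vs_ok None).1.2.
  have {}bE s' : b s' = if s' is Some j then vs None j else 0.
    by rewrite bE update_init_None.
  split=> [|s notSome]; last by case: s notSome => [j []|]; [exists j | rewrite bE].
  split=> [[j|]|]; rewrite ?bE //; first by case: (vs_ok None) => -[+ _] _; apply.
  by rewrite sum_option bE add0r -vs_sum; apply: eq_bigr => j _; rewrite bE.
have bNone : b None = 0 by apply: b0 => -[].
exists (fun _ a => b (Some a)); split=> [s|s'].
  split=> //; split=> [a|]; first by case: b_distr => + _; apply.
  by rewrite -b_distr.2 sum_option bNone add0r.
rewrite update_init_None; first by case: s'.
by rewrite -b_distr.2 sum_option bNone add0r.
Qed.

Lemma card_Vext_choice : (Vext (@distr_on R state (range Some)) #= `I_N)%card.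
Proof.
rewrite Vext_distr_on; apply: (card_eq_trans (inj_card_eq _)).
  by move=> ? ? _ _; apply: delta_belief_inj.
apply: (card_eq_trans (inj_card_eq _)); first by move=> ? ? _ _ [].
exact/card_esym/card_II.
Qed.

(* Some k never emits Some j, so the normaliser vanishes and the update is
   0 / 0 = 0. *)
Lemma est_up1_inconsistent k j b : k != j ->
  est_up1 choice_mdp (delta (Some k)) (Some j) b -> b = fun=> 0.
Proof.
move=> kj [vs [_ bE]]; apply: funext => s.
rewrite bE [X in _ / X]sum_delta_mull [X in _ / X]big1 ?invr0 ?mulr0 // => a _.
rewrite Pt_choice sum_delta_mull /= /delta_belief /= (inj_eq Some_inj).
by rewrite eq_sym (negbTE kj) addr0 !mul0r mulr0.
Qed.

Definition always (j : 'I_N) : @scheduler R state 'I_N := fun _ _ => delta_belief j.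

Lemma always_scheduler j : is_scheduler choice_mdp (always j).
Proof. by move=> s0 steps _; split=> //; exact: is_distr_delta. Qed.

Lemma pr_trace_always j : 0 < pr_trace choice_mdp (always j) [:: None; None; Some j].
Proof.
pose p : @pathsT state 'I_N state [:: None; None; Some j] :=
  (None, [tuple (j, Some j); (j, Some j)]).
have p_path : is_path choice_mdp p.1 p.2.
  by rewrite /is_path /= /Pt /= /delta_belief /= !eqxx ltr01.
apply: lt_le_trans (pr_trace_ge_path _ p_path); last by move=> *; exact: ler0n.
rewrite /pr_path /pr_trace_given_path /= !big_ord_recr big_ord0 /= /Pt /=.
rewrite /always !delta_belief_id /delta_belief /= !mul1r addr0 add0r; lra.
Qed.

End ChoiceMDP.

Local Open Scope card_scope.

Theorem theorem3 (R : realType) :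
  exists F : nat -> MDPpack R,
    forall n : nat, (1 <= n)%N ->
      exists (tau : seq (pZ (F n))) (r : pS (F n) -> R),
        tau <> [::] /\ (forall s, 0 <= r s) /\
        let M := pM (F n) in
        let B := Vext (est_MDP M tau) in
        B #= `I_(2 ^ n) /\
        forall bel, B bel ->
          exists tau' : seq (pZ (F n)), tau' <> [::] /\
            let B' := est_up M (B `\ bel) tau' in
            sup [set x | exists b'', B' b'' /\ x = \sum_(s : pS (F n)) b'' s * r s]
              < Rr M r (tau ++ tau').
Proof.
have pow2_gt0 n : (0 < 2 ^ n)%N by rewrite expn_gt0.
exists (fun n => Pack (choice_mdp R (pow2_gt0 n))) => n _ /=.
exists [:: None; None], (fun=> 1); split=> //; split=> [_|]; first exact: ler01.
rewrite est_MDP_choice; split; first exact: card_Vext_choice.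
rewrite Vext_distr_on => _ [_ [j _ <-] <-].
exists [:: Some j]; split=> //.
apply: (le_lt_trans (sup_le0 _)); last first.
  apply: lt_le_trans ltr01 _.
  exact: Rr_const1_ge1 (always_scheduler j) (pr_trace_always _ _ j).
move=> _ [b'' [[_ [[_ [k _ <-] <-] other] upd] ->]].
have kj : k != j by apply: contra_notN other => /eqP ->.
by rewrite (est_up1_inconsistent kj upd) big1 // => s _; rewrite mul0r.
Qed.
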